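(* Let $n\ge2$, let $X\subset\mathbb{R}^n$ be finite with the Euclidean metric $d$, let $k\in\mathbb{N}$, $Y\subset X$ and $\epsilon>0$. Suppose $p\in C$ for some $C\in\mathcal{D}^*(Y,\epsilon)$ and $x\in Y\setminus C$. Then there exists $a\in(\partial C)^{\mathfrak{n}}_C\subset J(Y,\epsilon)$ such that $\rho^Y(a,x)\le\rho^Y(p,x)$.
   Context: DBSCAN$^*$: for $Y\subset X$, $\mathcal{C}(Y,\epsilon)=\{p\in Y:|\{y\in Y:d(p,y)\le\epsilon\}|>k\}$, $\mathcal{N}(Y,\epsilon)=Y\setminus\mathcal{C}(Y,\epsilon)$, and $\mathcal{D}^*(Y,\epsilon)$ is the set of vertex sets of the connected components of the graph with vertex set $\mathcal{C}(Y,\epsilon)$ and an edge between distinct $p,q$ whenever $d(p,q)\le\epsilon$. For $p\in Y$, $\operatorname{core}^Y_k(p)$ is the distance from $p$ to a $k$-th nearest neighbour of $p$ in $Y$ (the $k$-th smallest value of $d(p,y)$, $y\in Y\setminus\{p\}$, with multiplicity), and $\rho^Y(p,q)=\max\{\operatorname{core}^Y_k(p),\operatorname{core}^Y_k(q),d(p,q)\}$ for $p\neq q$, $\rho^Y(p,p)=0$. Cubes: $\mathcal{Q}=\mathcal{Q}(\epsilon)$ is the collection of closed cubes $\{x\in\mathbb{R}^n: j_i\frac{\epsilon}{2\sqrt n}\le x_i\le (j_i+1)\frac{\epsilon}{2\sqrt n}\}$, $j\in\mathbb{Z}^n$; $S^m=\{x:\max_i|x_i-s_i|\le m\frac{\epsilon}{2\sqrt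 n}\text{ for some }s\in S\}$; $\mathcal{I}(B)=\{S\in\mathcal{Q}:S\cap B\neq\emptyset\}$. For $A\subset X$, $S\in\mathcal{I}(A)$ is an interior cube of $A$ if $S^1\cap X\subset A$ and every $T\in\mathcal{Q}$ with $T\subset S^1$ lies in $\mathcal{I}(A)$, otherwise a boundary cube; $\partial A$ is the union of boundary cubes. For $Z\subset\mathbb{R}^n$ and integer $N\ge0$, $Z^N=\bigcup_{S\in\mathcal{I}(Z)}S^N$ and $Z^N_C=Z^N\cap C$. $\mathfrak{n}$ is the smallest integer with $\mathfrak{n}\ge\sqrt n-1$. $J(Y,\epsilon)=\bigcup_{C\in\mathcal{D}^*(Y,\epsilon)}(\partial C)^{\mathfrak{n}}_C\cup\mathcal{N}(Y,\epsilon)$. *)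

From HB Require Import structures.
From mathcomp Require Import all_boot all_order all_algebra finmap.
From mathcomp Require Import all_classical all_reals.
From Stdlib Require Import Relation_Operators.
Set Implicit Arguments. Unset Strict Implicit. Unset Printing Implicit Defensive.
Import Order.TTheory GRing.Theory Num.Theory.
Local Open Scope ring_scope.
Local Open Scope classical_set_scope.

Section Dbscan.
Variables (R : realType) (n : nat).
Notation pt := 'rV[R]_n.

Definition dist (p q : pt) : R := Num.sqrt (\sum_(i < n) (p 0 i - q 0 i) ^+ 2).

Definition core_pt (Y : {fset pt}) (k : nat) (eps : R) (p : pt) : Prop :=
  p \in Y /\ (k < #|` [fset y in Y | (dist p y <= eps)%R]%fset|)%N.

Definition noise_pt (Y : {fset pt}) (k : nat) (eps : R) (p : pt) : Prop :=
  p \in Y /\ ~ core_pt Y k eps p.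

Definition core_edge (Y : {fset pt}) (k : nat) (eps : R) (u v : pt) : Prop :=
  core_pt Y k eps u /\ core_pt Y k eps v /\ dist u v <= eps.

Definition is_component (Y : {fset pt}) (k : nat) (eps : R) (C : set pt) : Prop :=
  exists c, core_pt Y k eps c /\
    C = [set q | clos_refl_trans pt (core_edge Y k eps) c q].

(* core^Y_k(p): k-th smallest value of d(p,y), y in Y \ {p}, with multiplicity
   (convention: 0 when k = 0) *)
Definition core_dist (Y : {fset pt}) (k : nat) (p : pt) : R :=
  if k is k'.+1 then nth 0 (sort <=%R [seq dist p y | y <- (Y `\ p)%fset]) k'
  else 0.

Definition rho (Y : {fset pt}) (k : nat) (p q : pt) : R :=
  if p == q then 0
  else Num.max (core_dist Y k p) (Num.max (core_dist Y k q) (dist p q)).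

Definition side (eps : R) : R := eps / (2 * Num.sqrt n%:R).

Definition cube (eps : R) (j : 'I_n -> int) : set pt :=
  [set x | forall i, (j i)%:~R * side eps <= x 0 i /\ x 0 i <= (j i + 1)%:~R * side eps].

Definition is_cube (eps : R) (S : set pt) : Prop := exists j, S = cube eps j.

Definition thick (eps : R) (S : set pt) (m : nat) : set pt :=
  [set x | exists s, S s /\ forall i, `|x 0 i - s 0 i| <= m%:R * side eps].

Definition Icubes (eps : R) (B : set pt) : set (set pt) :=
  [set S | is_cube eps S /\ S `&` B !=set0].

Definition interior_cube (X : {fset pt}) (eps : R) (A : set pt) (S : set pt) : Prop :=
  Icubes eps A S /\
  thick eps S 1 `&` [set x | x \in X] `<=` A /\
  (forall T, is_cube eps T -> T `<=` thick eps S 1 -> Icubes eps A T).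

Definition boundary_cube (X : {fset pt}) (eps : R) (A : set pt) (S : set pt) : Prop :=
  Icubes eps A S /\ ~ interior_cube X eps A S.

Definition boundary (X : {fset pt}) (eps : R) (A : set pt) : set pt :=
  [set x | exists S, boundary_cube X eps A S /\ S x].

Definition Zthick (eps : R) (Z : set pt) (N : nat) : set pt :=
  [set x | exists S, Icubes eps Z S /\ thick eps S N x].

Definition Zthick_in (eps : R) (Z : set pt) (N : nat) (C : set pt) : set pt :=
  Zthick eps Z N `&` C.

(* frak n : smallest integer >= sqrt n - 1 (nonnegative for n >= 1) *)
Definition frakn : nat := `|Num.ceil (Num.sqrt (n%:R : R) - 1)|%N.

Definition Jset (X Y : {fset pt}) (k : nat) (eps : R) : set pt :=
  [set a | exists C, is_component Y k eps C /\
                     Zthick_in eps (boundary X eps C) frakn C a]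
  `|` [set a | noise_pt Y k eps a].

End Dbscan.

(* Walk from p to x along the segment [p, x] through the cubes of Q(eps).  The
   first cube meets C; if every cube met were interior, each would force the next
   one into I(C), and the last one, which contains x in X, would put x in C.  So
   the segment meets a boundary cube at some y.  If d(p, y) < sqrt n * side = eps/2,
   then p lies in the frakn-thickening of that cube because sqrt n <= frakn + 1,
   and a = p works.  Otherwise any a in C inside that cube has
   d(a, y) <= eps/2 <= d(p, y), hence d(a, x) <= d(p, x); as x is not in C,
   core(a) <= eps < max(core(x), d(p, x)), so rho(a, x) <= rho(p, x). *)

From HB Require Import structures.
From mathcomp Require Import all_boot all_order all_algebra finmap.
From mathcomp Require Import all_classical all_reals.
From mathcomp Require Import ring lra zify.
From Stdlib Require Import Relation_Operators.
Set Implicit Arguments. Unset Strict Implicit. Unset Printing Implicit Defensive.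
Import Order.TTheory GRing.Theory Num.Theory.
Local Open Scope ring_scope.
Local Open Scope classical_set_scope.

Section Euclidean.
Variables (R : realType) (n : nat).
Implicit Types (p q a x y : 'rV[R]_n) (u v : 'I_n -> R) (l : R).

Lemma sumr_sqr_ge0 u : 0 <= \sum_i u i ^+ 2.
Proof. by apply: sumr_ge0 => i _; rewrite sqr_ge0. Qed.

Lemma sum_mul_sqr_le u v :
  (\sum_i u i * v i) ^+ 2 <= (\sum_i u i ^+ 2) * (\sum_i v i ^+ 2).
Proof.
set U := \sum_i u i ^+ 2; set V := \sum_i v i ^+ 2; set S := \sum_i u i * v i.
have lagrange_id : \sum_i \sum_j (u i * v j - u j * v i) ^+ 2 = 2 * (U * V - S ^+ 2).
  transitivity (\sum_i \sum_j
      (u i ^+ 2 * v j ^+ 2 + v i ^+ 2 * u j ^+ 2 - 2 * (u i * v i) * (u j * v j))).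
    by apply: eq_bigr => i _; apply: eq_bigr => j _; ring.
  under eq_bigr do rewrite sumrB big_split /= -!mulr_sumr -/U -/V -/S.
  by rewrite sumrB big_split /= -!mulr_suml -mulr_sumr -/U -/V -/S; ring.
have : 0 <= 2 * (U * V - S ^+ 2).
  by rewrite -lagrange_id; apply: sumr_ge0 => i _; apply: sumr_sqr_ge0.
by rewrite pmulr_rge0 // subr_ge0.
Qed.

Lemma sum_mul_le_sqrt u v :
  \sum_i u i * v i <= Num.sqrt (\sum_i u i ^+ 2) * Num.sqrt (\sum_i v i ^+ 2).
Proof.
rewrite -sqrtrM ?sumr_sqr_ge0 // (le_trans (ler_norm _)) //.
by rewrite -sqrtr_sqr ler_sqrt ?sum_mul_sqr_le // mulr_ge0 ?sumr_sqr_ge0.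
Qed.

Lemma dist_ge0 p q : 0 <= dist p q.
Proof. exact: sqrtr_ge0. Qed.

Lemma distxx p : dist p p = 0.
Proof. by rewrite /dist big1 ?sqrtr0 // => i _; rewrite subrr expr0n. Qed.

Lemma distC p q : dist p q = dist q p.
Proof. by rewrite /dist; congr Num.sqrt; apply: eq_bigr => i _; rewrite -sqrrN opprB. Qed.

Lemma coord_le_dist p q i : `|p 0 i - q 0 i| <= dist p q.
Proof.
rewrite -sqrtr_sqr ler_sqrt ?sumr_sqr_ge0 // (bigD1 i) //= lerDl.
by apply: sumr_ge0 => j _; apply: sqr_ge0.
Qed.

Lemma dist_le_sqrt_box p q (c : R) : 0 <= c -> (forall i, `|p 0 i - q 0 i| <= c) ->
  dist p q <= Num.sqrt n%:R * c.
Proof.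
move=> c0 box; rewrite -(ger0_norm c0) -sqrtr_sqr -sqrtrM ?ler0n // ler_sqrt; last first.
  by rewrite mulr_ge0 ?ler0n ?sqr_ge0.
apply: le_trans (_ : \sum_(i < n) c ^+ 2 <= _); last first.
  by rewrite sumr_const card_ord mulr_natl.
apply: ler_sum => i _.
by rewrite -real_normK ?num_real // ler_sqr ?nnegrE ?normr_ge0 ?(ger0_norm c0) ?box.
Qed.

Lemma dist_triangle a y x : dist a x <= dist a y + dist y x.
Proof.
have sum_ge0 : 0 <= dist a y + dist y x by rewrite addr_ge0 ?dist_ge0.
rewrite -(ger0_norm sum_ge0) -sqrtr_sqr ler_sqrt ?sqr_ge0 //.
rewrite sqrrD !sqr_sqrtr ?sumr_sqr_ge0 //.
have := sum_mul_le_sqrt (fun i => a 0 i - y 0 i) (fun i => y 0 i - x 0 i).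
have -> : \sum_i (a 0 i - x 0 i) ^+ 2 = \sum_i (a 0 i - y 0 i) ^+ 2 +
    2 * \sum_i (a 0 i - y 0 i) * (y 0 i - x 0 i) + \sum_i (y 0 i - x 0 i) ^+ 2.
  by rewrite mulr_sumr -!big_split /=; apply: eq_bigr => i _; ring.
rewrite -/(dist a y) -/(dist y x) mulr2n mulrDl mul1r; lra.
Qed.

Definition lerp p x (l : R) : 'rV[R]_n := p + l *: (x - p).

Lemma lerp0 p x : lerp p x 0 = p.
Proof. by rewrite /lerp scale0r addr0. Qed.

Lemma lerp1 p x : lerp p x 1 = x.
Proof. by rewrite /lerp scale1r addrC subrK. Qed.

Lemma dist_lerp_l p x l : 0 <= l -> dist p (lerp p x l) = l * dist p x.
Proof.
move=> l0; rewrite /dist -[in RHS](ger0_norm l0) -sqrtr_sqr -sqrtrM ?sqr_ge0 //.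
by congr Num.sqrt; rewrite mulr_sumr; apply: eq_bigr => i _; rewrite !mxE; ring.
Qed.

Lemma dist_lerp_r p x l : l <= 1 -> dist (lerp p x l) x = (1 - l) * dist p x.
Proof.
move=> l1; have l0 : 0 <= 1 - l by rewrite subr_ge0.
rewrite /dist -[in RHS](ger0_norm l0) -sqrtr_sqr -sqrtrM ?sqr_ge0 //.
by congr Num.sqrt; rewrite mulr_sumr; apply: eq_bigr => i _; rewrite !mxE; ring.
Qed.

Lemma dist_le_via_lerp a p x l : 0 <= l <= 1 ->
  dist a (lerp p x l) <= dist p (lerp p x l) -> dist a x <= dist p x.
Proof.
case/andP=> l0 l1 le_ay; apply: le_trans (dist_triangle a (lerp p x l) x) _.
move: le_ay; rewrite dist_lerp_l // dist_lerp_r //; lra.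
Qed.

End Euclidean.

Lemma cardfs_sep (T : choiceType) (A : {fset T}) (P : pred T) :
  #|` [fset x in A | P x]%fset| = count P A.
Proof.
rewrite -size_filter -(undup_id (filter_uniq P (fset_uniq A))) -card_fseq.
by congr #|` _|; apply/fsetP => x; rewrite !inE mem_filter andbC.
Qed.

Section CoreDistance.
Variables (R : realType) (n : nat).
Implicit Types (a x : 'rV[R]_n) (Y : {fset 'rV[R]_n}) (eps : R).

Local Notation sorted_dists Y a := (sort <=%R [seq dist a y | y <- (Y `\ a)%fset]).

Lemma card_ball Y a eps : a \in Y -> 0 <= eps ->
  #|` [fset y in Y | dist a y <= eps]%fset| = (count (<= eps) (sorted_dists Y a)).+1.
Proof.
move=> aY eps0; rewrite (permP (permEl (perm_sort _ _))) count_map -cardfs_sep.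
rewrite (cardfsD1 a) !inE aY distxx eps0 add1n; congr (#|` _|).+1.
by apply/fsetP => y; rewrite !inE; case: (y == a).
Qed.

Lemma core_dist_le Y k eps a : 0 <= eps -> core_pt Y k eps a -> core_dist Y k a <= eps.
Proof.
move=> eps0 [aY]; rewrite card_ball //; case: k => [|k] // k_lt.
by apply: nth_count_le => //; apply: sort_sorted; apply: le_total.
Qed.

Lemma core_dist_gt Y k eps x : 0 <= eps -> x \in Y -> ~ core_pt Y k eps x ->
  (k < #|` Y|)%N -> eps < core_dist Y k x.
Proof.
move=> eps0 xY not_core k_lt; have ball := card_ball xY eps0.
case: k => [|k] in not_core k_lt *.
  by exfalso; apply: not_core; rewrite /core_pt ball.
apply: nth_count_gt; first by apply: sort_sorted; apply: le_total.
have -> : (count (<= eps) (sorted_dists Y x) <= k)%N.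
  by rewrite leqNgt; apply: contra_notN not_core => ?; split; rewrite // ball.
by move: k_lt; rewrite size_sort size_map (cardfsD1 x) xY add1n.
Qed.

End CoreDistance.

Section Components.
Variables (R : realType) (n : nat) (Y : {fset 'rV[R]_n}) (k : nat) (eps : R).
Variable C : set 'rV[R]_n.
Hypothesis C_comp : is_component Y k eps C.
Implicit Types (a p q u v x : 'rV[R]_n).

Lemma component_core q : C q -> core_pt Y k eps q.
Proof.
case: C_comp => c [c_core ->] /= cq.
by elim: cq c_core => [u v [_ [? _]] _ | | u v w _ IHuv _ IHvw /IHuv/IHvw].
Qed.

Lemma component_edge_closed u v : C u -> core_edge Y k eps u v -> C v.
Proof. by case: C_comp => c [_ ->] /= Cu uv; apply: rt_trans Cu (rt_step _ _ _ _ uv). Qed.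

Lemma lt_reach_outside_component p x : 0 <= eps -> C p -> x \in Y -> ~ C x ->
  eps < Num.max (core_dist Y k x) (dist p x).
Proof.
move=> eps0 Cp xY Cx; rewrite lt_max.
have [x_core | x_noise] := pselect (core_pt Y k eps x).
  apply/orP; right; rewrite ltNge; apply: contra_notN Cx => pxe.
  by apply: (component_edge_closed Cp); split; [apply: component_core | split].
apply/orP; left; apply: core_dist_gt => //.
have [_ /leq_trans] := component_core Cp; apply; apply: fsubset_leq_card.
by apply/fsubsetP => y; rewrite inE => /andP[].
Qed.

Lemma rho_le_in_component a p x : 0 <= eps -> C a -> C p -> x \in Y -> ~ C x ->
  dist a x <= dist p x -> rho Y k a x <= rho Y k p x.
Proof.
move=> eps0 Ca Cp xY Cx le_dist.
have neq_x q : C q -> q != x by move=> Cq; apply: contra_notN Cx => /eqP <-.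
rewrite /rho (negbTE (neq_x a Ca)) (negbTE (neq_x p Cp)).
apply: (@le_trans _ _ (Num.max (core_dist Y k x) (dist p x))); last first.
  by rewrite le_max lexx orbT.
have core_a := le_lt_trans (core_dist_le eps0 (component_core Ca)).
rewrite !ge_max (ltW (core_a _ (lt_reach_outside_component eps0 Cp xY Cx))) /=.
by rewrite !le_max lexx le_dist !orbT.
Qed.

End Components.

Lemma floor_sub_le (R : realType) (t t' : R) (m : nat) :
  `|t' - t| <= m%:R -> `|Num.floor t' - Num.floor t| <= m%:Z.
Proof.
have floor_gap (u v : R) : v - u <= m%:R -> Num.floor v - Num.floor u <= m%:Z.
  move=> vu; rewrite -ltzD1 -(ltr_int R) rmorphB rmorphD /=.
  by have := floor_le v; have := floorD1_gt u; lra.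
move=> /ler_normlP[tt' t't]; rewrite ler_norml; apply/andP; split.
  by rewrite lerNl opprB floor_gap //; lra.
by rewrite floor_gap //; lra.
Qed.

Lemma sqrt_le_frakn1 (R : realType) (n : nat) : (0 < n)%N ->
  Num.sqrt (n%:R : R) <= (frakn R n)%:R + 1.
Proof.
move=> n_gt0; have sqrt_ge1 : 1 <= Num.sqrt (n%:R : R).
  by rewrite -{1}sqrtr1 ler_sqrt ?ler0n // ler1n.
have ceil_ge0 : 0 <= Num.ceil (Num.sqrt (n%:R : R) - 1) by rewrite ceil_ge0; lra.
rewrite /frakn -[((`|_|%N)%:R : R)]/(((`|_|%N : nat)%:Z)%:~R : R) gez0_abs //.
by have := ceil_ge (Num.sqrt (n%:R : R) - 1); lra.
Qed.

Lemma side_gt0 (R : realType) (n : nat) (eps : R) : (0 < n)%N -> 0 < eps -> 0 < side n eps.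
Proof. by move=> n_gt0 eps_gt0; rewrite divr_gt0 // mulr_gt0 // sqrtr_gt0 ltr0n. Qed.

Lemma idx_step_between (n : nat) (w P : 'I_n -> int) (N : nat) :
  (forall i, `|P i - w i| <= N.+1%:Z) ->
  exists j : 'I_n -> int,
    (forall i, `|j i - w i| <= 1) /\ (forall i, `|P i - j i| <= N%:Z).
Proof.
move=> near.
exists (fun i => if P i < w i then w i - 1 else if w i < P i then w i + 1 else w i).
by split=> i; have := near i; case: ltrgtP; lia.
Qed.

Section Cubes.
Variables (R : realType) (n : nat) (eps : R).
Hypothesis s_gt0 : 0 < side n eps.
Local Notation s := (side n eps).
Implicit Types (a p y z : 'rV[R]_n) (j : 'I_n -> int) (S Z : set 'rV[R]_n).

Definition cube_idx y : 'I_n -> int := fun i => Num.floor (y 0 i / s).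

Lemma cube_idxP y : cube eps (cube_idx y) y.
Proof.
move=> i; split; first by rewrite -ler_pdivlMr // floor_le.
by rewrite ltW // -ltr_pdivrMr // floorD1_gt.
Qed.

Lemma cube_idx_near y y' (m : nat) : (forall i, `|y' 0 i - y 0 i| <= m%:R * s) ->
  forall i, `|cube_idx y' i - cube_idx y i| <= m%:Z.
Proof.
move=> near i; apply: floor_sub_le.
by rewrite -mulrBl normrM normfV (gtr0_norm s_gt0) ler_pdivrMr.
Qed.

Lemma cube_diam j a y : cube eps j a -> cube eps j y ->
  dist a y <= Num.sqrt n%:R * s.
Proof.
move=> ja jy; apply: dist_le_sqrt_box (ltW s_gt0) _ => i.
have [a1 a2] := ja i; have [y1 y2] := jy i.
rewrite intrD mulrDl mul1r in a2 y2; rewrite ler_norml; apply/andP; split; lra.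
Qed.

Lemma thick_refl S (m : nat) : S `<=` thick eps S m.
Proof.
by move=> z Sz; exists z; split => // i; rewrite subrr normr0 mulr_ge0 ?ler0n ?ltW.
Qed.

(* Translating a point of cube j' by (j - j') s lands in cube j. *)
Lemma cube_sub_thick j j' (m : nat) : (forall i, `|j' i - j i| <= m%:Z) ->
  cube eps j' `<=` thick eps (cube eps j) m.
Proof.
move=> near z z_j'; exists (z + \row_i ((j i - j' i)%:~R * s)); split => i.
  have [lo hi] := z_j' i; rewrite !mxE rmorphB /= mulrBl.
  by rewrite !rmorphD /= !mulrDl mul1r in hi *; split; lra.
rewrite !mxE opprD addrA subrr sub0r normrN normrM (gtr0_norm s_gt0) ler_pM2r //.
by rewrite -intr_norm distrC -[(m%:R : R)]/((m%:Z)%:~R : R) ler_int.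
Qed.

Lemma cubes_meet j j' : (forall i, `|j' i - j i| <= 1) ->
  exists z, cube eps j z /\ cube eps j' z.
Proof.
move=> near; exists (\row_i ((Num.max (j i) (j' i))%:~R * s)).
by split => i; rewrite mxE; have := near i; split; rewrite ler_pM2r // ler_int; lia.
Qed.

Lemma Zthick_of_cube Z S (N : nat) a : is_cube eps S -> S `<=` Z -> S a -> Zthick eps Z N a.
Proof.
move=> cubeS SZ Sa; exists S; split; last exact: thick_refl.
by split=> //; exists a; split; last apply: SZ.
Qed.

Lemma Zthick_near_cube Z y p (N : nat) : cube eps (cube_idx y) `<=` Z ->
  (forall i, `|p 0 i - y 0 i| <= N.+1%:R * s) -> Zthick eps Z N p.
Proof.
move=> cubeZ near; have [j [adj_j near_j]] := idx_step_between (cube_idx_near near).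
exists (cube eps j); split; last exact: cube_sub_thick near_j _ (cube_idxP p).
split; first by exists j.
by have [z [yz jz]] := cubes_meet adj_j; exists z; split; last apply: cubeZ.
Qed.

End Cubes.

Section BoundaryCubes.
Variables (R : realType) (n : nat) (X : {fset 'rV[R]_n}) (eps : R).
Hypothesis s_gt0 : 0 < side n eps.
Local Notation s := (side n eps).
Implicit Types (p x : 'rV[R]_n) (A S : set 'rV[R]_n).

Lemma boundary_cube_sub A S : boundary_cube X eps A S -> S `<=` boundary X eps A.
Proof. by move=> bd z Sz; exists S. Qed.

Lemma not_boundary_interior A S :
  Icubes eps A S -> ~ boundary_cube X eps A S -> interior_cube X eps A S.
Proof. by move=> IS not_bd; apply: contrapT => not_int; apply: not_bd. Qed.

Lemma interior_cube_chain A (f : nat -> 'I_n -> int) (M : nat) :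
  Icubes eps A (cube eps (f 0%N)) ->
  (forall t, (t < M)%N -> forall i, `|f t.+1 i - f t i| <= 1) ->
  (forall t, (t <= M)%N -> ~ boundary_cube X eps A (cube eps (f t))) ->
  interior_cube X eps A (cube eps (f M)).
Proof.
move=> I0 adj not_bd; suff: forall t, (t <= M)%N -> interior_cube X eps A (cube eps (f t)).
  by apply.
elim=> [_ | t IHt tM]; apply: not_boundary_interior (not_bd _ _) => //.
have [_ [_ nbhd]] := IHt (ltnW tM).
by apply: nbhd; [exists (f t.+1) | apply: cube_sub_thick (adj _ tM)].
Qed.

Lemma segment_boundary_cube A p x : A p -> x \in X -> ~ A x ->
  exists2 l : R, 0 <= l <= 1 & boundary_cube X eps A (cube eps (cube_idx eps (lerp p x l))).
Proof.
move=> Ap xX Ax; apply: contrapT => no_bd.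
pose M := (Num.trunc (dist p x / s)).+1.
have M_gt0 : 0 < M%:R :> R by rewrite ltr0n.
pose f t := cube_idx eps (lerp p x (t%:R / M%:R)).
have f0 : f 0%N = cube_idx eps p by rewrite /f mul0r lerp0.
have fM : f M = cube_idx eps x by rewrite /f divff ?gt_eqF // lerp1.
have: interior_cube X eps A (cube eps (f M)).
  apply: interior_cube_chain.
  - rewrite f0; split; first by exists (cube_idx eps p).
    by exists p; split; first exact: cube_idxP.
  - move=> t _ i; apply: (cube_idx_near s_gt0 (m := 1)) => {}i.
    rewrite !mxE mul1r.
    have -> : p 0 i + t.+1%:R / M%:R * (x 0 i - p 0 i) -
        (p 0 i + t%:R / M%:R * (x 0 i - p 0 i)) = (x 0 i - p 0 i) / M%:R.
      by rewrite -natr1; field; rewrite gt_eqF.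
    rewrite normrM normfV (gtr0_norm M_gt0) ler_pdivrMr //.
    apply: le_trans (coord_le_dist x p i) _; rewrite distC -ler_pdivrMl //.
    by rewrite mulrC ltW // truncnS_gt.
  - move=> t tM not_int; apply: no_bd; exists (t%:R / M%:R) => //.
    by rewrite divr_ge0 ?ler0n //= ler_pdivrMr // mul1r ler_nat.
case=> _ [thick_sub _]; apply: Ax; apply: thick_sub; split => //.
by rewrite fM; apply: (thick_refl s_gt0); apply: cube_idxP.
Qed.

End BoundaryCubes.

Theorem corollary5p5 (R : realType) (n : nat) (X Y : {fset 'rV[R]_n}) (k : nat)
  (eps : R) (C : classical_sets.set 'rV[R]_n) (p x : 'rV[R]_n) :
  (2 <= n)%N -> fsubset Y X -> 0 < eps ->
  is_component Y k eps C -> C p ->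
  x \in Y -> ~ C x ->
  exists a, Zthick_in eps (boundary X eps C) (frakn R n) C a /\
            Jset X Y k eps a /\
            rho Y k a x <= rho Y k p x.
Proof.
move=> n_ge2 YX eps_gt0 C_comp Cp xY Cx.
have n_gt0 : (0 < n)%N by apply: leq_trans n_ge2.
have s_gt0 := side_gt0 n_gt0 eps_gt0.
have [l l01 bd] := segment_boundary_cube s_gt0 Cp (fsubsetP YX x xY) Cx.
set y := lerp p x l in bd; have cube_bd := boundary_cube_sub bd.
suff [a [Za [Ca le_rho]]] : exists a, Zthick eps (boundary X eps C) (frakn R n) a /\ C a /\
    rho Y k a x <= rho Y k p x.
  by exists a; do !split => //; left; exists C.
have [near | far] := ltP (dist p y) (Num.sqrt n%:R * side n eps).
  exists p; split; last by split.
  apply: (Zthick_near_cube s_gt0 cube_bd) => i.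
  apply: le_trans (coord_le_dist p y i) _; apply/ltW/(lt_le_trans near).
  by rewrite ler_pM2r // -natr1 sqrt_le_frakn1.
have [_ [a [ya Ca]]] := bd.1.
exists a; split.
  by apply: (Zthick_of_cube s_gt0 _ _ cube_bd ya); exists (cube_idx eps y).
split=> //; apply: rho_le_in_component (ltW eps_gt0) Ca Cp xY Cx _ => //.
apply: dist_le_via_lerp l01 _; apply: le_trans far.
exact: (cube_diam s_gt0 ya (cube_idxP s_gt0 y)).
Qed.
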